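(* Let $L:\mathbb{R}^d\to\mathbb{R}^{\mathcal{Y}}_+$ be a minimizable loss. If $L$ has a finite representative set $\mathcal{S}\subseteq\mathbb{R}^d$, then $L$ embeds the discrete loss $L|_{\mathcal{S}}$ (the restriction of $L$ to $\mathcal{S}$).
   Context: $\mathcal{Y}$ is a finite label set, $\Delta_{\mathcal{Y}}$ the simplex, $\mathbb{R}^{\mathcal{Y}}_+$ the nonnegative orthant. A loss $L:\mathcal{R}\to\mathbb{R}^{\mathcal{Y}}_+$ is minimizable if $\inf_r\langle p,L(r)\rangle$ is attained for every $p\in\Delta_{\mathcal{Y}}$; then $\mathrm{prop}[L](p)=\arg\min_r\langle p,L(r)\rangle$. $\mathcal{S}$ is representative for $L$ if $\mathrm{prop}[L](p)\cap\mathcal{S}\ne\emptyset$ for all $p$. A loss is discrete if its report set is finite. A minimizable $L:\mathbb{R}^d\to\mathbb{R}^{\mathcal{Y}}_+$ embeds $\ell:\mathcal{R}\to\mathbb{R}^{\mathcal{Y}}_+$ if there exist a representative set $\mathcal{S}'$ for $\ell$ and an injective $\varphi:\mathcal{S}'\to\mathbb{R}^d$ with (i) $L(\varphi(r))=\ell(r)$ for $r\in\mathcal{S}'$ and (ii) $r\in\mathrm{prop}[\ell](p)\iff\varphi(r)\in\mathrm{prop}[L](p)$ for all $p$, $r\in\mathcal{S}'$. *)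

From HB Require Import structures.
From mathcomp Require Import all_boot all_order all_algebra.
From mathcomp Require Import boolp classical_sets functions cardinality reals.
Set Implicit Arguments. Unset Strict Implicit. Unset Printing Implicit Defensive.
Import Order.TTheory GRing.Theory Num.Theory.
Local Open Scope ring_scope.
Local Open Scope classical_set_scope.

Section Losses.
Variables (R : realType) (Y : finType).

Definition simplex (p : Y -> R) : Prop :=
  (forall y, 0 <= p y) /\ \sum_(y : Y) p y = 1.

Definition nonneg_loss (Rep : Type) (L : Rep -> Y -> R) : Prop :=
  forall r y, 0 <= L r y.

Definition expected_loss (Rep : Type) (L : Rep -> Y -> R) (p : Y -> R) (r : Rep) : R :=
  \sum_(y : Y) p y * L r y.

Definition prop (Rep : Type) (L : Rep -> Y -> R) (p : Y -> R) (r : Rep) : Prop :=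
  forall r', expected_loss L p r <= expected_loss L p r'.

Definition minimizable (Rep : Type) (L : Rep -> Y -> R) : Prop :=
  forall p, simplex p -> exists r, prop L p r.

Definition representative (Rep : Type) (L : Rep -> Y -> R) (S : set Rep) : Prop :=
  forall p, simplex p -> exists r, S r /\ prop L p r.

Definition discrete_loss (Rep : Type) (l : Rep -> Y -> R) : Prop :=
  finite_set [set: Rep].

Definition embeds (d : nat) (L : 'rV[R]_d -> Y -> R) (Rep : Type) (l : Rep -> Y -> R) : Prop :=
  minimizable L /\
  exists S' : set Rep, representative l S' /\
  exists phi : Rep -> 'rV[R]_d,
    (forall r1 r2, S' r1 -> S' r2 -> phi r1 = phi r2 -> r1 = r2) /\
    (forall r, S' r -> L (phi r) = l r) /\
    (forall p r, simplex p -> S' r -> (prop l p r <-> prop L p (phi r))).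

Definition restrict_loss (d : nat) (L : 'rV[R]_d -> Y -> R) (S : set 'rV[R]_d)
  : {x : 'rV[R]_d | S x} -> Y -> R :=
  fun x => L (proj1_sig x).

End Losses.
Arguments restrict_loss {R Y d} L S _ _.

From HB Require Import structures.
From mathcomp Require Import all_boot all_order all_algebra.
From mathcomp Require Import boolp classical_sets functions cardinality reals.
Import Order.TTheory.
Local Open Scope ring_scope.
Local Open Scope classical_set_scope.

(* Since S contains a global minimizer of every expected loss, minimizing over
   S and minimizing over all of R^d give the same optimal reports in S; hence
   the inclusion of S into R^d is the embedding, with S itself representative
   for the restricted loss. *)

Lemma sval_inj (T : Type) (P : T -> Prop) : injective (@sval T P).
Proof. exact: eq_sig_hprop (fun x => @Prop_irrelevance (P x)). Qed.

Lemma finite_setT_sig (T : Type) (S : set T) :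
  finite_set S -> finite_set [set: {x | S x}].
Proof.
move=> finS; have -> : [set: {x | S x}] = sval @^-1` S.
  by apply/seteqP; split=> // x _; exact: svalP.
by apply: finite_preimage finS => x y _ _; exact: sval_inj.
Qed.

Section Restriction.
Variables (R : realType) (Y : finType) (d : nat).
Variables (L : 'rV[R]_d -> Y -> R) (S : set 'rV[R]_d).
Hypothesis repS : representative L S.

Lemma prop_restrict_loss p r : simplex p ->
  prop (restrict_loss L S) p r <-> prop L p (sval r).
Proof.
move=> simp; split=> [optS x | opt r']; last exact: opt.
have [r0 [Sr0 opt0]] := repS p simp.
exact: le_trans (optS (exist _ r0 Sr0)) (opt0 x).
Qed.

Lemma representative_restrict_loss : representative (restrict_loss L S) setT.
Proof.
move=> p simp; have [r [Sr opt]] := repS p simp.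
by exists (exist _ r Sr); split=> // r'; exact: opt.
Qed.

Lemma embeds_restrict_loss : minimizable L -> embeds L (restrict_loss L S).
Proof.
move=> minL; split=> //; exists setT; split; first exact: representative_restrict_loss.
exists sval; split; first by move=> r1 r2 _ _; exact: sval_inj.
by split=> // p r simp _; exact: prop_restrict_loss.
Qed.

End Restriction.

Theorem proposition1 (R : realType) (Y : finType) (d : nat)
  (L : 'rV[R]_d -> Y -> R) (S : set 'rV[R]_d) :
  nonneg_loss L -> minimizable L ->
  finite_set S -> representative L S ->
  discrete_loss (restrict_loss L S) /\ embeds L (restrict_loss L S).
Proof.
move=> _ minL finS repS; split; first exact: finite_setT_sig.
exact: embeds_restrict_loss.
Qed.
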